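(* Let $(\mathcal{S},\mathcal{A},\mathbb{P},\mathbb{T})$ be a Controlled Markov Process, let $s_0\in\mathcal{S}$, and let $\succsim_1,\succsim_2$ be two preference relations over lotteries of finite trajectories of this CMP, each satisfying the VNM axioms and the additivity axiom. If $\succsim_1$ and $\succsim_2$ agree on all pairs of lotteries that start from $s_0$, then they agree on all pairs of lotteries of trajectories that start from states reachable from $s_0$ (a state $s$ is reachable from $s_0$ if there is a finite trajectory from $s_0$ to $s$). That is, the preferences over lotteries starting from $s_0$ uniquely determine all preferences over lotteries of trajectories reachable from $s_0$.
   Context: A CMP is a tuple $(\mathcal{S},\mathcal{A},\mathbb{P},\mathbb{T})$: $\mathcal{S}$ a countable state set, $\mathcal{A}$ an action set, $\mathbb{P}:\mathcal{S}\times\mathcal{A}\to\mathcal{D}(\mathcal{S})\cup\{0\}$ transition distributions ($0$ = illegal), $\mathbb{T}:\mathcal{S}\times\mathcal{A}\times\mathcal{S}\to[0,1]$ termination probabilities. A transition is a triple $(s,a,s')$; a trajectory of length $n\ge1$ is a sequence $\langle(s_i,a_i,s_i')\rangle_{i=1}^n$ of transitions of the CMP with $s_i'=s_{i+1}$, starting at $s_1$ and ending at $s_n'$; for each state $s$, $\epsilon_s$ is the empty trajectory at $s$. Outcomes are the finite trajectories; a lottery is a probability distribution over outcomes, compound lotteries being identified with their reductions. A lottery starts from $s$ if supported on trajectories starting at $s$. Concatenation $\tau\cdot\tau'$ (for $\tau$ ending where $\tau'$ starts) is extended to lotteries by distributing over mixtures. VNM axioms on a preference relation $\succsim$ over lotteries: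 completeness; transitivity; continuity (if $L\succsim M\succsim N$, some $p\in[0,1]$ gives $pL+(1-p)N\approx M$); independence (for all $L,M,N$ and $p\in[0,1)$, $L\succsim M\iff(1-p)L+pN\succsim(1-p)M+pN$). Additivity axiom: for all states $s$, trajectories $\tau_1,\tau_2$ ending at $s$, lotteries $L,M$ starting from $s$, lotteries $N,K$, and $p\in[0,1]$: $p(\tau_1\cdot L)+(1-p)N\succsim p(\tau_1\cdot M)+(1-p)K\iff p(\tau_2\cdot L)+(1-p)N\succsim p(\tau_2\cdot M)+(1-p)K$. *)

From Stdlib Require Import Reals Lra List ClassicalEpsilon.
Import ListNotations.
Open Scope R_scope.
Set Implicit Arguments.

Definition lsum {X : Type} (f : X -> R) (l : list X) : R :=
  fold_right Rplus 0 (map f l).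

(* d is a probability distribution on the countable set S: nonnegative and its
   (unordered, possibly infinite) sum -- the sup of its finite partial sums -- is 1 *)
Definition is_distr {S : Type} (d : S -> R) : Prop :=
  (forall s, 0 <= d s) /\
  (forall l : list S, NoDup l -> lsum d l <= 1) /\
  (forall eps, 0 < eps -> exists l : list S, NoDup l /\ 1 - eps < lsum d l).

(* Controlled Markov Process (S, A, P, T); P s a = None encodes the illegal value 0 *)
Record CMP (S A : Type) := {
  P : S -> A -> option (S -> R);
  T : S -> A -> S -> R;
  P_distr : forall s a d, P s a = Some d -> is_distr d;
  T_range : forall s a s', 0 <= T s a s' <= 1;
  S_countable : exists enc : S -> nat, forall x y, enc x = enc y -> x = y
}.

Definition is_transition {S A} (M : CMP S A) (s : S) (a : A) (s' : S) : Prop :=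
  exists d, P M s a = Some d /\ 0 < d s'.

(* A trajectory is a start state together with the list of its transitions
   (s_i, a_i, s_i'); (s, []) is the empty trajectory eps_s. *)
Definition traj (S A : Type) : Type := (S * list (S * A * S))%type.

Fixpoint chain {S A} (M : CMP S A) (s : S) (l : list (S * A * S)) : Prop :=
  match l with
  | [] => True
  | ((s1, a), s2) :: l' => s1 = s /\ is_transition M s1 a s2 /\ chain M s2 l'
  end.

Definition valid_traj {S A} (M : CMP S A) (t : traj S A) : Prop :=
  chain M (fst t) (snd t).

Definition tstart {S A} (t : traj S A) : S := fst t.
Definition tend {S A} (t : traj S A) : S :=
  last (map (fun tr : S * A * S => snd tr) (snd t)) (fst t).

(* Lotteries are represented by their (reduced) probability mass function over
   outcomes; mixtures are pointwise, so compound lotteries are automatically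
   identified with their reductions. *)
Definition lottery (S A : Type) : Type := traj S A -> R.

Definition is_lottery {S A} (M : CMP S A) (L : lottery S A) : Prop :=
  (forall x, 0 <= L x) /\
  (forall x, L x <> 0 -> valid_traj M x) /\
  exists supp : list (traj S A),
    NoDup supp /\ (forall x, L x <> 0 -> In x supp) /\ lsum L supp = 1.

Definition starts_from {S A} (s : S) (L : lottery S A) : Prop :=
  forall x, L x <> 0 -> tstart x = s.

Definition mix {S A} (p : R) (L N : lottery S A) : lottery S A :=
  fun x => p * L x + (1 - p) * N x.

(* tau . L : the image of L under tau' |-> tau . tau' (tau' starting at tend tau).
   x = (t, m) has the form tau . tau' iff t = tstart tau and m extends snd tau. *)
Definition concL {S A} (tau : traj S A) (L : lottery S A) : lottery S A :=
  fun x =>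
    if excluded_middle_informative
         (fst x = fst tau /\ firstn (length (snd tau)) (snd x) = snd tau)
    then L (tend tau, skipn (length (snd tau)) (snd x))
    else 0.

Definition reachable {S A} (M : CMP S A) (s0 s : S) : Prop :=
  exists tau : traj S A, valid_traj M tau /\ tstart tau = s0 /\ tend tau = s.

Section PrefProps.
Context {S A : Type} (M : CMP S A) (pref : lottery S A -> lottery S A -> Prop).

Definition indiff (L K : lottery S A) : Prop := pref L K /\ pref K L.

Definition VNM : Prop :=
  (forall L K, is_lottery M L -> is_lottery M K -> pref L K \/ pref K L) /\
  (forall L K N, is_lottery M L -> is_lottery M K -> is_lottery M N ->
     pref L K -> pref K N -> pref L N) /\
  (forall L K N, is_lottery M L -> is_lottery M K -> is_lottery M N ->
     pref L K -> pref K N ->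
     exists p, 0 <= p <= 1 /\ indiff (mix p L N) K) /\
  (forall L K N p, is_lottery M L -> is_lottery M K -> is_lottery M N ->
     0 <= p < 1 ->
     (pref L K <-> pref (mix (1 - p) L N) (mix (1 - p) K N))).

Definition additive : Prop :=
  forall (s : S) (tau1 tau2 : traj S A) (L K N N' : lottery S A) (p : R),
    valid_traj M tau1 -> tend tau1 = s ->
    valid_traj M tau2 -> tend tau2 = s ->
    is_lottery M L -> starts_from s L ->
    is_lottery M K -> starts_from s K ->
    is_lottery M N -> is_lottery M N' ->
    0 <= p <= 1 ->
    (pref (mix p (concL tau1 L) N) (mix p (concL tau1 K) N') <->
     pref (mix p (concL tau2 L) N) (mix p (concL tau2 K) N')).

End PrefProps.

(* Additivity, taken with p = 1 and with the empty trajectory at s as second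
   prefix, says that prefixing lotteries starting from s by any trajectory tau
   ending at s preserves and reflects preference. Choosing tau from s0 to s
   turns every comparison at s into one at s0, where the two relations agree. *)

From Stdlib Require Import Reals Lra List FunctionalExtensionality ClassicalEpsilon.
Import ListNotations.
Open Scope R_scope.

Lemma last_cons_default {X} (l : list X) (x d : X) : last (x :: l) d = last l x.
Proof.
  revert x d; induction l as [|y l IH]; intros x d; [reflexivity|].
  change (last (y :: l) d = last (y :: l) x). now rewrite !IH.
Qed.

Lemma lsum_filter {X} (f : X -> R) (b : X -> bool) (l : list X) :
  (forall x, b x = false -> f x = 0) -> lsum f (filter b l) = lsum f l.
Proof.
  intros Hf; unfold lsum; induction l as [|x l IH]; [reflexivity|]; simpl.
  destruct (b x) eqn:Hb; simpl; rewrite IH; [reflexivity|].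
  rewrite (Hf x Hb); ring.
Qed.

Section Concatenation.
Context {S A : Type} (M : CMP S A).

Definition tconc (tau tau' : traj S A) : traj S A := (tstart tau, snd tau ++ snd tau').

Lemma chain_app (l1 l2 : list (S * A * S)) (s : S) :
  chain M s l1 -> chain M (last (map (fun tr : S * A * S => snd tr) l1) s) l2 ->
  chain M s (l1 ++ l2).
Proof.
  revert s; induction l1 as [|[[s1 a] s2] l1 IH]; intros s H1 H2; [exact H2|].
  destruct H1 as [-> [Htr Hc]].
  cbn [map] in H2; rewrite last_cons_default in H2.
  repeat split; auto.
Qed.

Lemma valid_traj_tconc (tau tau' : traj S A) :
  valid_traj M tau -> valid_traj M tau' -> tstart tau' = tend tau ->
  valid_traj M (tconc tau tau').
Proof.
  destruct tau' as [s' m']; unfold valid_traj, tstart, tend; simpl; intros Hv Hv' ->.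
  now apply chain_app.
Qed.

Lemma concL_tconc (tau tau' : traj S A) (L : lottery S A) :
  tstart tau' = tend tau -> concL tau L (tconc tau tau') = L tau'.
Proof.
  destruct tau' as [s' m']; unfold concL, tconc, tstart; simpl; intros ->.
  rewrite firstn_app, firstn_all, Nat.sub_diag, app_nil_r.
  rewrite skipn_app, skipn_all, Nat.sub_diag.
  destruct excluded_middle_informative as [_|Hnot]; [reflexivity|].
  exfalso; now apply Hnot.
Qed.

Lemma concL_neq0 (tau x : traj S A) (L : lottery S A) :
  concL tau L x <> 0 -> exists tau', tstart tau' = tend tau /\ x = tconc tau tau'.
Proof.
  unfold concL; destruct excluded_middle_informative as [[Hs Hm]|]; [|lra].
  intros _; exists (tend tau, skipn (length (snd tau)) (snd x)); split; [reflexivity|].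
  destruct x as [t m]; unfold tconc, tstart; simpl in *.
  now rewrite Hs, <- Hm at 1; rewrite firstn_skipn.
Qed.

Lemma starts_from_concL (tau : traj S A) (L : lottery S A) :
  starts_from (tstart tau) (concL tau L).
Proof.
  intros x Hx; apply concL_neq0 in Hx as [tau' [_ ->]]; reflexivity.
Qed.

Lemma is_lottery_concL (tau : traj S A) (L : lottery S A) :
  valid_traj M tau -> is_lottery M L -> starts_from (tend tau) L ->
  is_lottery M (concL tau L).
Proof.
  intros Hv [Hpos [Hval [supp [Hnd [Hsupp Hsum]]]]] Hst.
  set (nonzero := fun y : traj S A => if Req_EM_T (L y) 0 then false else true).
  assert (Hnonzero : forall y, In y (filter nonzero supp) -> L y <> 0).
  { intros y Hy; apply filter_In in Hy as [_ Hy]; unfold nonzero in Hy.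
    destruct Req_EM_T; congruence. }
  split; [|split].
  - intros x; destruct (Req_EM_T (concL tau L x) 0) as [->|Hx]; [lra|].
    destruct (concL_neq0 _ _ _ Hx) as [tau' [Hs' ->]].
    rewrite concL_tconc by exact Hs'; apply Hpos.
  - intros x Hx; destruct (concL_neq0 _ _ _ Hx) as [tau' [Hs' ->]].
    rewrite concL_tconc in Hx by exact Hs'.
    apply valid_traj_tconc; auto.
  - exists (map (tconc tau) (filter nonzero supp)); split; [|split].
    + apply NoDup_map_NoDup_ForallPairs; [|now apply NoDup_filter].
      intros [s1 m1] [s2 m2] I1 I2 Heq.
      apply Hnonzero, Hst in I1; apply Hnonzero, Hst in I2.
      unfold tconc, tstart in *; simpl in *; injection Heq as Heq.
      apply app_inv_head in Heq; congruence.
    + intros x Hx; destruct (concL_neq0 _ _ _ Hx) as [tau' [Hs' ->]].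
      rewrite concL_tconc in Hx by exact Hs'.
      apply in_map, filter_In; split; [now apply Hsupp|].
      unfold nonzero; destruct Req_EM_T; [contradiction|reflexivity].
    + unfold lsum; rewrite map_map; fold (lsum (fun y => concL tau L (tconc tau y))).
      rewrite <- Hsum, <- (lsum_filter L nonzero supp).
      * unfold lsum; f_equal; apply map_ext_in; intros y Hy.
        now apply concL_tconc, Hst, Hnonzero.
      * intros y Hy; unfold nonzero in Hy; destruct Req_EM_T; congruence.
Qed.

End Concatenation.

Lemma mix_1 {S A} (L N : lottery S A) : mix 1 L N = L.
Proof. apply functional_extensionality; intro x; unfold mix; ring. Qed.

Lemma concL_nil {S A} (s : S) (L : lottery S A) :
  starts_from s L -> concL (s, []) L = L.
Proof.
  intros Hst; apply functional_extensionality; intros [t m]; unfold concL; simpl.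
  destruct excluded_middle_informative as [[-> _]|Hnot]; [reflexivity|].
  destruct (Req_EM_T (L (t, m)) 0) as [|Hnz]; [easy|].
  exfalso; apply Hnot; split; [exact (Hst _ Hnz)|reflexivity].
Qed.

Lemma additive_concL_iff {S A} (M : CMP S A) pref (tau : traj S A) (L K : lottery S A) :
  additive M pref -> valid_traj M tau ->
  is_lottery M L -> starts_from (tend tau) L ->
  is_lottery M K -> starts_from (tend tau) K ->
  (pref L K <-> pref (concL tau L) (concL tau K)).
Proof.
  intros Hadd Hv HL HsL HK HsK.
  pose proof (Hadd (tend tau) tau (tend tau, []) L K L L 1 Hv eq_refl I eq_refl
                HL HsL HK HsK HL HL ltac:(lra)) as Hiff.
  rewrite !mix_1, !concL_nil in Hiff by assumption.
  now symmetry.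
Qed.

Theorem proposition3 (S A : Type) (M : CMP S A) (s0 : S)
  (pref1 pref2 : lottery S A -> lottery S A -> Prop) :
  VNM M pref1 -> additive M pref1 ->
  VNM M pref2 -> additive M pref2 ->
  (forall L K, is_lottery M L -> starts_from s0 L ->
               is_lottery M K -> starts_from s0 K ->
               (pref1 L K <-> pref2 L K)) ->
  forall s, reachable M s0 s ->
  forall L K, is_lottery M L -> starts_from s L ->
              is_lottery M K -> starts_from s K ->
              (pref1 L K <-> pref2 L K).
Proof.
  intros _ Hadd1 _ Hadd2 Hagree s [tau [Hv [<- <-]]] L K HL HsL HK HsK.
  rewrite (additive_concL_iff M pref1 tau L K Hadd1 Hv HL HsL HK HsK),
          (additive_concL_iff M pref2 tau L K Hadd2 Hv HL HsL HK HsK).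
  apply Hagree; auto using is_lottery_concL, starts_from_concL.
Qed.
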